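(* Consider the search algorithm AMRA* described in the context, run on a multi-resolution planning problem with $N$ resolutions. During each iteration of its outer (anytime) loop, i.e. during each call of ImprovePath, every state is expanded at most $N+1$ times.
   Context: Planning problem: a state space $\mathcal{X}$, a start state $x_s\in\mathcal{X}$, a goal set $\mathcal{G}\subset\mathcal{X}$, and an edge cost function $c:\mathcal{X}\times\mathcal{X}\to\mathbb{R}_{\ge 0}$; the cost of a path is the sum of its edge costs. There are $N$ resolutions $r=1,\dots,N$ ($r=1$ finest); resolution $r$ has a vertex set $V_r\subset\mathcal{X}$ and an action space $\mathcal{A}_r$ whose actions connect states of $V_r$ (edge set $E_r$). The anchor resolution $r=0$ uses the union action space $\mathcal{A}_0=\bigcup_{r\ge1}\mathcal{A}_r$, with $V_0=\bigcup_{r\ge1}V_r$ (taken equal to $V_1$) and edge set $E_0$; $G_0=(V_0,E_0)$. For a state $x$, $\mathrm{Resolutions}(x)=\{r\ge1: x\in V_r\}$; $\mathrm{Succs}(x,\mathcal{A}_r)$ denotes the valid successors of $x$ via actions of $\mathcal{A}_r$ (for $r=0$: all valid successors at all resolutions in $\mathrm{Resolutions}(x)$). Heuristics $h_0,\dots,h_M\ge0$ are given; $h_0$ (anchor) is consistent: $h_0(x_i)\le h_0(x_j)+c(x_i,x_j)$ for every edge; each $h_i$, $i\ge1$, is assigned a resolution $\mathrm{Res}(i)\in\{1,\dots,N\}$, every resolution receiving at least one heuristic (so $M\ge N$), and $\mathrm{Res}(0)=0$. Parameters $w_1,w_2\ge1$. AMRA*: Keep $g$-values (initially $\infty$, $g(x_s)=0$),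 back-pointers $bp$, priority queues $OPEN_0,\dots,OPEN_M$ (initially empty), sets $CLOSED_0,\dots,CLOSED_N$, and a set $INCONS$ (initially $\{x_s\}$). $\mathrm{Key}(x,i)=g(x)+w_1h_i(x)$. Outer loop (while $w_1\ge1$ and $w_2\ge1$): insert/update every $x\in INCONS$ in $OPEN_0$ with key $\mathrm{Key}(x,0)$ and clear $INCONS$; for every $x\in OPEN_0$ and every $j\in\{1,\dots,M\}$ with $\mathrm{Res}(j)\in\mathrm{Resolutions}(x)$, insert/update $x$ in $OPEN_j$ with key $\mathrm{Key}(x,j)$; clear all $CLOSED_r$; call ImprovePath and, if it returns true, publish the path obtained by following $bp$ from $x_{goal}$ to $x_s$; stop if $w_1=w_2=1$, else decrease $w_1,w_2$. ImprovePath: repeat until the open queues are exhausted: choose an inadmissible queue $i\in\{1,\dots,M\}$ (round robin); if $\min OPEN_i\le w_2\cdot\min OPEN_0$, pop the minimum $x$ of $OPEN_i$, run Expand$(x,i)$, insert $x$ into $CLOSED_{\mathrm{Res}(i)}$, and if $x\in\mathcal{G}$ set $x_{goal}=x$ and return true; otherwise pop the minimum $x$ of $OPEN_0$, run Expand$(x,0)$, insert $x$ into $CLOSED_0$, and if $x\in\mathcal{G}$ set $x_{goal}=x$ and return true. If the queues are exhausted, return false (failure). Expand$(x,i)$: let $r=\mathrm{Res}(i)$. If $i\ne0$, remove $x$ from every $OPEN_j$ with $j>0$, $j\ne i$, $\mathrm{Res}(j)=r$. For each $x'\in\mathrm{Succs}(x,\mathcal{A}_r)$ with $g(x')>g(x)+c(x,x')$: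 set $g(x')=g(x)+c(x,x')$, $bp(x')=x$; if $x'\in CLOSED_0$ insert $x'$ into $INCONS$; otherwise insert/update $x'$ in $OPEN_0$ with key $\mathrm{Key}(x',0)$, and for each $j\in\{1,\dots,M\}$ with $l=\mathrm{Res}(j)\in\mathrm{Resolutions}(x')$, $x'\notin CLOSED_l$ and $\mathrm{Key}(x',j)\le w_2\,\mathrm{Key}(x',0)$, insert/update $x'$ in $OPEN_j$ with key $\mathrm{Key}(x',j)$. *)

From Stdlib Require Import Reals Arith.
Open Scope R_scope.
Set Implicit Arguments.

(* A multi-resolution planning problem. Resolutions r = 1..N, heuristics
   i = 0..M (h 0 is the anchor). *)
Record problem := mkProblem {
  X : Type;
  xs : X;
  Goal : X -> Prop;
  c : X -> X -> R;
  nres : nat;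
  V : nat -> X -> Prop;
  Succ : nat -> X -> X -> Prop;
  nheur : nat;                        (* number of inadmissible heuristics *)
  h : nat -> X -> R;
  Res : nat -> nat
}.

Definition InRes (P : problem) (x : X P) (r : nat) : Prop :=
  (1 <= r <= nres P)%nat /\ V P r x.

Definition wf_problem (P : problem) : Prop :=
  (1 <= nres P)%nat /\
  (forall x y, 0 <= c P x y) /\
  (forall r x y, (1 <= r <= nres P)%nat -> Succ P r x y -> V P r x /\ V P r y) /\
  (* V_0 = union of the V_r, taken equal to V_1 *)
  (forall r x, (1 <= r <= nres P)%nat -> V P r x -> V P 1 x) /\
  (forall i x, (i <= nheur P)%nat -> 0 <= h P i x) /\
  (forall r x y, (1 <= r <= nres P)%nat -> Succ P r x y ->
      h P 0 x <= h P 0 y + c P x y) /\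
  (forall i, (1 <= i <= nheur P)%nat -> (1 <= Res P i <= nres P)%nat) /\
  (forall r, (1 <= r <= nres P)%nat -> exists i, (1 <= i <= nheur P)%nat /\ Res P i = r) /\
  (nres P <= nheur P)%nat.

Definition Succs (P : problem) (r : nat) (x y : X P) : Prop :=
  match r with
  | O => exists r', InRes P x r' /\ Succ P r' x y
  | S _ => Succ P r x y
  end.

Definition ResQ (P : problem) (i : nat) : nat :=
  match i with O => O | S _ => Res P i end.

(* Algorithm state.  g = None means g = infinity; a priority queue is a
   partial map from states to keys (None = not in the queue). *)
Record state (P : problem) := mkState {
  g : X P -> option R;
  bp : X P -> option (X P);
  opn : nat -> X P -> option R;   (* OPEN_0 .. OPEN_M *)
  cls : nat -> X P -> Prop;       (* CLOSED_0 .. CLOSED_N *)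
  incons : X P -> Prop;
  w1 : R;
  w2 : R;
  rr : nat;                       (* round-robin: next inadmissible queue *)
  xgoal : option (X P);           (* Some x once ImprovePath returned true *)
  cnt : X P -> nat                (* instrumentation: number of expansions of
                                     each state in the current ImprovePath *)
}.

Definition key (P : problem) (s : state P) (i : nat) (x : X P) : option R :=
  match g s x with
  | Some v => Some (v + w1 s * h P i x)
  | None => None
  end.

Definition is_min {P : problem} (q : X P -> option R) (x : X P) (k : R) : Prop :=
  q x = Some k /\ forall y k', q y = Some k' -> k <= k'.

Definition improved (P : problem) (s : state P) (r : nat) (x y : X P) : Prop :=
  Succs P r x y /\
  exists v, g s x = Some v /\
    (g s y = None \/ exists v', g s y = Some v' /\ v + c P x y < v').

Definition expand (P : problem) (s : state P) (i : nat) (x : X P) (s' : state P)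
  : Prop :=
  let r := ResQ P i in
  (forall y, improved s r x y ->
      g s' y = option_map (fun v => v + c P x y) (g s x)) /\
  (forall y, ~ improved s r x y -> g s' y = g s y) /\
  (forall y, improved s r x y -> bp s' y = Some x) /\
  (forall y, ~ improved s r x y -> bp s' y = bp s y) /\
  (forall y, incons s' y <-> incons s y \/ (improved s r x y /\ cls s 0 y)) /\
  (forall y, improved s r x y /\ ~ cls s 0 y -> opn s' 0 y = key s' 0 y) /\
  (forall y, ~ (improved s r x y /\ ~ cls s 0 y) -> opn s' 0 y = opn s 0 y) /\
  (forall j y, (1 <= j <= nheur P)%nat ->
     let ins := improved s r x y /\ ~ cls s 0 y /\ InRes P y (Res P j) /\
                ~ cls s (Res P j) y /\
                exists kj k0, key s' j y = Some kj /\ key s' 0 y = Some k0 /\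
                              kj <= w2 s * k0 in
     let rem := i <> 0%nat /\ y = x /\ j <> i /\ Res P j = r in
     (ins -> opn s' j y = key s' j y) /\
     (~ ins -> rem -> opn s' j y = None) /\
     (~ ins -> ~ rem -> opn s' j y = opn s j y)) /\
  (forall j y, (nheur P < j)%nat -> opn s' j y = opn s j y) /\
  cls s' = cls s /\ w1 s' = w1 s /\ w2 s' = w2 s /\ rr s' = rr s /\
  xgoal s' = xgoal s /\ cnt s' = cnt s.

Definition pop (P : problem) (s : state P) (i : nat) (x : X P) (s' : state P) : Prop :=
  opn s' i x = None /\
  (forall j y, j <> i \/ y <> x -> opn s' j y = opn s j y) /\
  g s' = g s /\ bp s' = bp s /\ cls s' = cls s /\ incons s' = incons s /\
  w1 s' = w1 s /\ w2 s' = w2 s /\ rr s' = rr s /\ xgoal s' = xgoal s /\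
  cnt s' = cnt s.

Definition next_rr (P : problem) (i : nat) : nat := (Nat.modulo i (nheur P) + 1)%nat.

Definition finish (P : problem) (i : nat) (x : X P) (s s' : state P) : Prop :=
  (forall r y, cls s' r y <-> cls s r y \/ (r = ResQ P i /\ y = x)) /\
  (forall y, y = x -> cnt s' y = S (cnt s y)) /\
  (forall y, y <> x -> cnt s' y = cnt s y) /\
  (Goal P x -> xgoal s' = Some x) /\
  (~ Goal P x -> xgoal s' = None) /\
  rr s' = next_rr P (rr s) /\
  g s' = g s /\ bp s' = bp s /\ opn s' = opn s /\ incons s' = incons s /\
  w1 s' = w1 s /\ w2 s' = w2 s.

(* ImprovePath has not returned yet: no goal found, queues not exhausted *)
Definition ip_active (P : problem) (s : state P) : Prop :=
  xgoal s = None /\ exists j y, (j <= nheur P)%nat /\ opn s j y <> None.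

Definition ip_done (P : problem) (s : state P) : Prop :=
  xgoal s <> None \/ forall j y, (j <= nheur P)%nat -> opn s j y = None.

(* x is a minimum of OPEN_i and min OPEN_i <= w2 * min OPEN_0
   (min of an empty queue = +infinity) *)
Definition cond_inadm (P : problem) (s : state P) (i : nat) (x : X P) (k : R) : Prop :=
  is_min (opn s i) x k /\ forall y k0, opn s 0 y = Some k0 -> k <= w2 s * k0.

(* One iteration of the repeat loop of ImprovePath. *)
Inductive ip_step (P : problem) : state P -> state P -> Prop :=
| ip_inadm (s s1 s2 s3 : state P) (x : X P) (k : R) :
    ip_active s -> cond_inadm s (rr s) x k ->
    pop s (rr s) x s1 -> expand s1 (rr s) x s2 -> finish (rr s) x s2 s3 ->
    ip_step s s3
| ip_anchor (s s1 s2 s3 : state P) (x : X P) (k : R) :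
    ip_active s -> ~ (exists x' k', cond_inadm s (rr s) x' k') ->
    is_min (opn s 0) x k ->
    pop s 0 x s1 -> expand s1 0 x s2 -> finish 0 x s2 s3 ->
    ip_step s s3
| ip_skip (s : state P) :
    (* OPEN_i and OPEN_0 both empty while other queues are not: move on to
       the next inadmissible queue *)
    ip_active s -> ~ (exists x' k', cond_inadm s (rr s) x' k') ->
    (forall y, opn s 0 y = None) ->
    ip_step s (@mkState P (g s) (bp s) (opn s) (cls s) (incons s) (w1 s) (w2 s)
                       (next_rr P (rr s)) (xgoal s) (cnt s)).

Inductive ip_star (P : problem) : state P -> state P -> Prop :=
| ip_refl (s : state P) : ip_star s s
| ip_trans (s s' s'' : state P) : ip_step s s' -> ip_star s' s'' -> ip_star s s''.

(* Beginning of an outer iteration, up to (and including) the start of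
   ImprovePath: s0 is the state at the start of the ImprovePath call. *)
Definition ip_init (P : problem) (s s0 : state P) : Prop :=
  1 <= w1 s /\ 1 <= w2 s /\
  (forall y, incons s y -> opn s0 0 y = key s 0 y) /\
  (forall y, ~ incons s y -> opn s0 0 y = opn s 0 y) /\
  (forall y, ~ incons s0 y) /\
  (forall j y, (1 <= j <= nheur P)%nat ->
      opn s0 0 y <> None /\ InRes P y (Res P j) -> opn s0 j y = key s j y) /\
  (forall j y, (1 <= j <= nheur P)%nat ->
      ~ (opn s0 0 y <> None /\ InRes P y (Res P j)) -> opn s0 j y = opn s j y) /\
  (forall j y, (nheur P < j)%nat -> opn s0 j y = opn s j y) /\
  (forall r y, ~ cls s0 r y) /\
  g s0 = g s /\ bp s0 = bp s /\ w1 s0 = w1 s /\ w2 s0 = w2 s /\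
  (1 <= rr s0 <= nheur P)%nat /\ xgoal s0 = None /\ (forall y, cnt s0 y = 0%nat).

Definition outer_next (P : problem) (s1 s2 : state P) : Prop :=
  ~ (w1 s1 = 1 /\ w2 s1 = 1) /\
  w1 s2 <= w1 s1 /\ w2 s2 <= w2 s1 /\
  g s2 = g s1 /\ bp s2 = bp s1 /\ opn s2 = opn s1 /\ cls s2 = cls s1 /\
  incons s2 = incons s1 /\ rr s2 = rr s1 /\ xgoal s2 = xgoal s1 /\ cnt s2 = cnt s1.

Definition init_state (P : problem) (a b : R) (s : state P) : Prop :=
  g s (xs P) = Some 0 /\ (forall y, y <> xs P -> g s y = None) /\
  (forall y, bp s y = None) /\ (forall j y, opn s j y = None) /\
  (forall r y, ~ cls s r y) /\ (forall y, incons s y <-> y = xs P) /\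
  w1 s = a /\ w2 s = b /\ xgoal s = None /\ (forall y, cnt s y = 0%nat).

Inductive reach_outer (P : problem) (a b : R) : state P -> Prop :=
| ro_init (s : state P) : init_state a b s -> reach_outer a b s
| ro_next (s s0 s1 s2 : state P) :
    reach_outer a b s -> ip_init s s0 -> ip_star s0 s1 -> ip_done s1 ->
    outer_next s1 s2 -> reach_outer a b s2.

(* Every expansion of a state x from a queue OPEN_i closes x in CLOSED_Res(i), and the
   algorithm maintains that no state sitting in OPEN_j is already closed in
   CLOSED_Res(j): Expand only inserts unclosed states, and it purges x from the other
   queues of its own resolution.  Hence the expansions of x within one ImprovePath
   close x in pairwise distinct lists among CLOSED_0, ..., CLOSED_N, so there are at
   most N + 1 of them. *)
From Stdlib Require Import Reals Arith.
From Stdlib Require Import Classical Lia Lra List.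
Open Scope R_scope.
Set Implicit Arguments.

Lemma NoDup_bounded_length (L : list nat) (n : nat) :
  NoDup L -> (forall r, In r L -> (r <= n)%nat) -> (length L <= n + 1)%nat.
Proof.
  intros Hnd Hle.
  replace (n + 1)%nat with (length (seq 0 (S n))) by (rewrite length_seq; lia).
  apply NoDup_incl_length; [exact Hnd |].
  intros r Hr. apply in_seq. specialize (Hle r Hr). lia.
Qed.

Section ImprovePathInvariant.

Variable P : problem.
Hypothesis W : wf_problem P.

Lemma nheur_pos : (1 <= nheur P)%nat.
Proof. destruct W as (H1 & _ & _ & _ & _ & _ & _ & _ & H2). lia. Qed.

Lemma ResQ_range (j : nat) : (j <= nheur P)%nat -> (ResQ P j <= nres P)%nat.
Proof.
  intros Hj. destruct W as (_ & _ & _ & _ & _ & _ & HR & _).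
  destruct j as [| j]; simpl; [lia |]. specialize (HR (S j)). lia.
Qed.

Lemma ResQ_pos (j : nat) : (1 <= j <= nheur P)%nat -> (1 <= ResQ P j)%nat.
Proof.
  intros Hj. destruct W as (_ & _ & _ & _ & _ & _ & HR & _).
  destruct j as [| j]; simpl; [lia |]. specialize (HR (S j)). lia.
Qed.

Lemma not_improved_self (s : state P) (r : nat) (x : X P) : ~ improved s r x x.
Proof.
  destruct W as (_ & Hc & _).
  intros [_ [v [Hv [Hinf | [v' [Hv' Hlt]]]]]]; rewrite Hv in *; [discriminate |].
  injection Hv' as <-. specialize (Hc x x). lra.
Qed.

Lemma next_rr_range (i : nat) : (1 <= next_rr P i <= nheur P)%nat.
Proof.
  pose proof nheur_pos. pose proof (Nat.mod_upper_bound i (nheur P)).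
  unfold next_rr. lia.
Qed.

Definition open_not_closed (s : state P) : Prop :=
  forall j y, (j <= nheur P)%nat -> opn s j y <> None -> ~ cls s (ResQ P j) y.

(* The list L enumerates, without repetition, the CLOSED lists in which the
   expansions of y have put it. *)
Definition expansions_recorded (s : state P) : Prop :=
  forall y, exists L : list nat, NoDup L /\ length L = cnt s y /\
    forall r, In r L -> (r <= nres P)%nat /\ cls s r y.

Definition ip_invariant (s : state P) : Prop :=
  (1 <= rr s <= nheur P)%nat /\ open_not_closed s /\ expansions_recorded s.

Lemma pop_open_not_closed (s s' : state P) (i : nat) (x : X P) :
  pop s i x s' -> open_not_closed s -> open_not_closed s'.
Proof.
  intros (Hx & Hother & _ & _ & Hcls & _) Hinv j y Hj Hopen.
  rewrite Hcls. apply (Hinv j y Hj).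
  destruct (Nat.eq_dec j i) as [-> | Hji].
  - destruct (classic (y = x)) as [-> | Hyx]; [congruence |].
    rewrite <- Hother by (right; exact Hyx). exact Hopen.
  - rewrite <- Hother by (left; exact Hji). exact Hopen.
Qed.

Lemma expand_open_not_closed (s s' : state P) (i : nat) (x : X P) :
  expand s i x s' -> open_not_closed s -> open_not_closed s'.
Proof.
  intros (_ & _ & _ & _ & _ & _ & Hopen0 & Hopenj & _ & Hcls & _) Hinv j y Hj Hopen.
  rewrite Hcls. destruct j as [| j]; simpl.
  - destruct (classic (improved s (ResQ P i) x y /\ ~ cls s 0 y)) as [[_ Hy] | Hkeep];
      [exact Hy |].
    rewrite Hopen0 in Hopen by exact Hkeep. exact (Hinv 0%nat y Hj Hopen).
  - destruct (Hopenj (S j) y ltac:(lia)) as [_ [Hrem Hkeep]]. cbv zeta in Hrem, Hkeep.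
    match type of Hrem with ~ ?Ins -> ?Rem -> _ =>
      destruct (classic Ins) as [(_ & _ & _ & Hy & _) | Hins];
      [exact Hy | destruct (classic Rem) as [Hr | Hr]] end.
    + exfalso. exact (Hopen (Hrem Hins Hr)).
    + rewrite Hkeep in Hopen by assumption. exact (Hinv (S j) y Hj Hopen).
Qed.

(* After [Expand(x, i)], x lies in no queue of resolution Res(i): OPEN_i was just
   popped, x never improves itself, and the other queues of Res(i) are purged. *)
Lemma expand_purges_resolution (s s' : state P) (i j : nat) (x : X P) :
  expand s i x s' -> (i <= nheur P)%nat -> opn s i x = None ->
  (j <= nheur P)%nat -> opn s' j x <> None -> ResQ P j <> ResQ P i.
Proof.
  intros (_ & _ & _ & _ & _ & _ & Hopen0 & Hopenj & _) Hi Hpopped Hj Hopen Hres.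
  assert (Hself : forall r, ~ (improved s r x x /\ ~ cls s 0 x))
    by (intros r [Himp _]; exact (not_improved_self Himp)).
  destruct j as [| j], i as [| i].
  - rewrite Hopen0 in Hopen by apply Hself. congruence.
  - pose proof (ResQ_pos (j := S i) ltac:(lia)). simpl in *. lia.
  - pose proof (ResQ_pos (j := S j) ltac:(lia)). simpl in *. lia.
  - destruct (Hopenj (S j) x ltac:(lia)) as [_ [Hrem Hkeep]]. cbv zeta in Hrem, Hkeep.
    assert (Hno_ins : ~ (improved s (ResQ P (S i)) x x /\ ~ cls s 0 x /\
                         InRes P x (Res P (S j)) /\ ~ cls s (Res P (S j)) x /\
                         exists kj k0, key s' (S j) x = Some kj /\
                           key s' 0 x = Some k0 /\ kj <= w2 s * k0))
      by (intros (Himp & _); exact (not_improved_self Himp)).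
    destruct (Nat.eq_dec j i) as [-> | Hji].
    + rewrite Hkeep in Hopen; [congruence | exact Hno_ins |].
      intros (_ & _ & Hne & _). congruence.
    + apply Hopen, Hrem; [exact Hno_ins |]. repeat split; [lia | congruence | exact Hres].
Qed.

Lemma finish_open_not_closed (s s' : state P) (i : nat) (x : X P) :
  finish i x s s' -> open_not_closed s ->
  (forall j, (j <= nheur P)%nat -> opn s j x <> None -> ResQ P j <> ResQ P i) ->
  open_not_closed s'.
Proof.
  intros (Hcls & _ & _ & _ & _ & _ & _ & _ & Hopn & _) Hinv Hpurged j y Hj Hopen Hc.
  rewrite Hopn in Hopen. apply Hcls in Hc as [Hc | [Hr ->]].
  - exact (Hinv j y Hj Hopen Hc).
  - exact (Hpurged j Hj Hopen Hr).
Qed.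

Lemma finish_expansions_recorded (s s' : state P) (i : nat) (x : X P) :
  finish i x s s' -> expansions_recorded s ->
  (i <= nheur P)%nat -> ~ cls s (ResQ P i) x -> expansions_recorded s'.
Proof.
  intros (Hcls & Hcnt_x & Hcnt_y & _) Hrec Hi Hfresh y.
  assert (Hkeep : forall r, cls s r y -> cls s' r y) by (intros r Hr; apply Hcls; left; exact Hr).
  destruct (Hrec y) as [L (Hnd & Hlen & HL)].
  destruct (classic (y = x)) as [-> | Hyx].
  - exists (ResQ P i :: L). split; [| split].
    + constructor; [| exact Hnd]. intros Hin. exact (Hfresh (proj2 (HL _ Hin))).
    + simpl. rewrite Hcnt_x by reflexivity. congruence.
    + intros r [<- | Hin].
      * split; [exact (ResQ_range Hi) |]. apply Hcls. right. split; reflexivity.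
      * destruct (HL r Hin) as [Hr Hc]. split; [exact Hr | exact (Hkeep r Hc)].
  - exists L. split; [exact Hnd | split].
    + rewrite Hcnt_y by exact Hyx. exact Hlen.
    + intros r Hin. destruct (HL r Hin) as [Hr Hc]. split; [exact Hr | exact (Hkeep r Hc)].
Qed.

Lemma expansion_step_invariant (s s1 s2 s3 : state P) (i : nat) (x : X P) (k : R) :
  ip_invariant s -> (i <= nheur P)%nat -> opn s i x = Some k ->
  pop s i x s1 -> expand s1 i x s2 -> finish i x s2 s3 -> ip_invariant s3.
Proof.
  intros (_ & Hinv & Hrec) Hi Hk Hpop Hexp Hfin.
  assert (Hfresh : ~ cls s (ResQ P i) x) by (apply (Hinv i x Hi); congruence).
  pose proof Hpop as (Hpopped & _ & _ & _ & Hcls1 & _ & _ & _ & _ & _ & Hcnt1).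
  pose proof Hexp as (_ & _ & _ & _ & _ & _ & _ & _ & _ & Hcls2 & _ & _ & _ & _ & Hcnt2).
  pose proof Hfin as (_ & _ & _ & _ & _ & Hrr3 & _).
  split; [| split].
  - rewrite Hrr3. apply next_rr_range.
  - apply (finish_open_not_closed Hfin).
    + exact (expand_open_not_closed Hexp (pop_open_not_closed Hpop Hinv)).
    + intros j. exact (expand_purges_resolution Hexp Hi Hpopped).
  - apply (finish_expansions_recorded Hfin); [| exact Hi | congruence].
    unfold expansions_recorded. rewrite Hcls2, Hcnt2, Hcls1, Hcnt1. exact Hrec.
Qed.

Lemma ip_step_invariant (s s' : state P) : ip_invariant s -> ip_step s s' -> ip_invariant s'.
Proof.
  intros Hinv Hstep.
  destruct Hstep as [s s1 s2 s3 x k _ [[Hk _] _] Hp He Hf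
                   | s s1 s2 s3 x k _ _ [Hk _] Hp He Hf
                   | s _ _ _].
  - apply (expansion_step_invariant Hinv (proj2 (proj1 Hinv)) Hk Hp He Hf).
  - apply (expansion_step_invariant Hinv (Nat.le_0_l _) Hk Hp He Hf).
  - destruct Hinv as (_ & Hinv & Hrec). split; [apply next_rr_range | split; assumption].
Qed.

Lemma ip_star_invariant (s s' : state P) : ip_star s s' -> ip_invariant s -> ip_invariant s'.
Proof.
  intros Hstar. induction Hstar as [s | s s' s'' Hstep _ IH]; intros Hinv;
    [exact Hinv | exact (IH (ip_step_invariant Hinv Hstep))].
Qed.

Lemma ip_init_invariant (s s0 : state P) : ip_init s s0 -> ip_invariant s0.
Proof.
  intros (_ & _ & _ & _ & _ & _ & _ & _ & Hcls & _ & _ & _ & _ & Hrr & _ & Hcnt).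
  split; [exact Hrr | split].
  - intros j y _ _ Hc. exact (Hcls _ _ Hc).
  - intros y. exists nil. rewrite Hcnt. split; [constructor | split; [reflexivity |]].
    intros r [].
Qed.

Lemma expansions_recorded_cnt_le (s : state P) (x : X P) :
  expansions_recorded s -> (cnt s x <= nres P + 1)%nat.
Proof.
  intros Hrec. destruct (Hrec x) as [L (Hnd & <- & HL)].
  apply NoDup_bounded_length; [exact Hnd |]. intros r Hr. exact (proj1 (HL r Hr)).
Qed.

End ImprovePathInvariant.

Theorem theorem1 :
  forall (P : problem), wf_problem P ->
  forall (a b : R), 1 <= a -> 1 <= b ->
  forall (s s0 s1 : state P),
    reach_outer a b s -> ip_init s s0 -> ip_star s0 s1 ->
    forall x : X P, (cnt s1 x <= nres P + 1)%nat.
Proof.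
  intros P W a b _ _ s s0 s1 _ Hinit Hstar x.
  pose proof (ip_star_invariant W Hstar (ip_init_invariant Hinit)) as (_ & _ & Hrec).
  exact (expansions_recorded_cnt_le x Hrec).
Qed.
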